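(* Let $q$ be a power of $2$. In $\mathrm{AG}(3,q^2)$ with affine coordinates $x,y,z$ and plane at infinity $\Sigma_\infty$, let $\mathcal H$ be the Hermitian surface $z^q+z=x^{q+1}+y^{q+1}$ and let $\mathcal Q$ be a hyperbolic quadric with affine equation $z=ax^2+by^2+cxy+dx+ey+f$, $a,\dots,f\in\mathrm{GF}(q^2)$, such that $\mathcal C_\infty=\mathcal Q\cap\mathcal H\cap\Sigma_\infty$ is the union of two lines. Let $\Xi_\infty$ be the quadric of $\mathrm{PG}(3,q)$ defined below. If $\Xi_\infty$ has rank $2$, then $\Xi_\infty$ is the union of two planes $\Pi_1\cup\Pi_2$ both defined over $\mathrm{GF}(q)$.
   Context: Fix $\nu\in\mathrm{GF}(q)\setminus\{1\}$ with absolute trace $\mathrm{Tr}_q(\nu)=\nu+\nu^2+\dots+\nu^{q/2}=1$, and $\varepsilon\in\mathrm{GF}(q^2)\setminus\mathrm{GF}(q)$ with $\varepsilon^2+\varepsilon+\nu=0$. Write each $t\in\mathrm{GF}(q^2)$ as $t=t_0+t_1\varepsilon$ with $t_0,t_1\in\mathrm{GF}(q)$ (so $a=a_0+a_1\varepsilon$, $b=b_0+b_1\varepsilon$, $c=c_0+c_1\varepsilon$, etc.). $\Xi_\infty$ is the quadric of $\mathrm{PG}(3,q)$ in coordinates $(x_0,x_1,y_0,y_1)$ with equation $(a_1+1)x_0^2+x_0x_1+[a_0+(1+\nu)a_1+\nu]x_1^2+(b_1+1)y_0^2+y_0y_1+[b_0+(1+\nu)b_1+\nu]y_1^2+c_1x_0y_0+(c_0+c_1)x_0y_1+(c_0+c_1)x_1y_0+[c_0+(1+\nu)c_1]x_1y_1=0.$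 The rank of a quadric is the minimum number of indeterminates appearing in an equation for it under projective changes of coordinates. *)

From HB Require Import structures.
From mathcomp Require Import all_boot all_order all_algebra.
Set Implicit Arguments. Unset Strict Implicit. Unset Printing Implicit Defensive.
Import Order.TTheory GRing.Theory.
Local Open Scope ring_scope.

Definition abs_trace (F : nzRingType) (h : nat) (x : F) : F :=
  \sum_(i < h) x ^+ (2 ^ i).

(* A quadratic form in n variables is represented by a matrix A, with
   Q(v) = v A v^T = sum_(i,j) A i j v_i v_j.  Its polynomial coefficients
   (coefficient of v_i v_j for i <= j) are given by qf_coef A. *)
Definition qf_coef (R : comNzRingType) (n : nat) (A : 'M[R]_n) : 'M[R]_n :=
  \matrix_(i, j) (if i == j then A i i
                  else if (i < j)%N then A i j + A j i else 0).

(* Projective change of coordinates v = w M transforms A into M A M^T. *)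
Definition qf_change (R : comNzRingType) (n : nat) (M A : 'M[R]_n) : 'M[R]_n :=
  M *m A *m M^T.

Definition qf_nvars (R : comNzRingType) (n : nat) (A : 'M[R]_n) : nat :=
  #|[set k : 'I_n | [exists i : 'I_n, exists j : 'I_n,
        ((i == k) || (j == k)) && (qf_coef A i j != 0)]]|.

Definition qf_rank (R : comUnitRingType) (n : nat) (A : 'M[R]_n) (r : nat) : Prop :=
  (exists2 M : 'M[R]_n, M \in unitmx & qf_nvars (qf_change M A) = r) /\
  (forall M : 'M[R]_n, M \in unitmx -> (r <= qf_nvars (qf_change M A))%N).

Definition hyp_canon (R : nzRingType) : 'M[R]_4 :=
  \matrix_(i, j) (if ((i == 0 :> nat) && (j == 1 :> nat)) ||
                     ((i == 2 :> nat) && (j == 3 :> nat)) then 1 else 0).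

Definition qf_hyperbolic (R : comUnitRingType) (A : 'M[R]_4) : Prop :=
  exists2 M : 'M[R]_4, M \in unitmx &
    exists2 lam : R, lam != 0 &
      qf_coef (qf_change M A) = lam *: qf_coef (hyp_canon R).

(* Coordinates (x, y, z, t) of PG(3,q^2) are indices 0,1,2,3; t = 0 is the
   plane at infinity.  Homogenized equation of Q:
   a x^2 + b y^2 + c x y + d x t + e y t + f t^2 - z t = 0. *)
Definition Qmat (L : nzRingType) (a b c d e f : L) : 'M[L]_4 :=
  \matrix_(i, j)
    match nat_of_ord i, nat_of_ord j with
    | 0, 0 => a | 1, 1 => b | 0, 1 => c | 0, 3 => d | 1, 3 => e
    | 3, 3 => f | 2, 3 => -1 | _, _ => 0 end.

Definition Qform (L : comNzRingType) (a b c d e f : L) (v : 'rV[L]_4) : L :=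
  (v *m Qmat a b c d e f *m v^T) 0 0.

Definition Hform (L : nzRingType) (q : nat) (v : 'rV[L]_4) : L :=
  let x := v 0 0 in let y := v 0 1 in let z := v 0 2 in let t := v 0 3 in
  z ^+ q * t + z * t ^+ q - (x ^+ q.+1 + y ^+ q.+1).

Definition Cinf (L : comNzRingType) (q : nat) (a b c d e f : L)
  (v : 'rV[L]_4) : Prop :=
  [/\ v != 0, v 0 3 = 0, Qform a b c d e f v = 0 & Hform q v = 0].

Definition union_two_lines (K : fieldType) (S : 'rV[K]_4 -> Prop) : Prop :=
  exists U1 U2 : 'M[K]_(2, 4),
    [/\ \rank U1 = 2%N, \rank U2 = 2%N, ~~ (U1 == U2)%MS &
      forall v : 'rV[K]_4, v != 0 -> (S v <-> ((v <= U1)%MS \/ (v <= U2)%MS))].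

(* The quadric Xi_inf of PG(3,q), coordinates (x0,x1,y0,y1) = indices 0..3. *)
Definition Xi_mat (F : nzRingType) (nu a0 a1 b0 b1 c0 c1 : F) : 'M[F]_4 :=
  \matrix_(i, j)
    match nat_of_ord i, nat_of_ord j with
    | 0, 0 => a1 + 1
    | 0, 1 => 1
    | 1, 1 => a0 + (1 + nu) * a1 + nu
    | 2, 2 => b1 + 1
    | 2, 3 => 1
    | 3, 3 => b0 + (1 + nu) * b1 + nu
    | 0, 2 => c1
    | 0, 3 => c0 + c1
    | 1, 2 => c0 + c1
    | 1, 3 => c0 + (1 + nu) * c1
    | _, _ => 0 end.

Definition qf_two_planes (K : fieldType) (A : 'M[K]_4) : Prop :=
  exists l1 l2 : 'rV[K]_4,
    \rank (col_mx l1 l2) = 2%N /\ qf_coef A = qf_coef (l1^T *m l2).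

(* Write X = x0 + x1 eps and Y = y0 + y1 eps in GF(q^2).  Then Xi_inf is the
   trace form Tr(a X^2 + b Y^2 + c X Y) + N(X) + N(Y), where Tr and N are the
   trace and norm of GF(q^2)/GF(q).  Each line of C_inf is t = 0, x = s y with
   s^(q+1) = 1 and a s^2 + c s + b = 0, and on the GF(q)-plane X = s Y the form
   becomes Tr(Y^2 (a s^2 + c s + b)) + (1 + N(s)) N(Y) = 0.  The two lines give
   two complementary such planes, so the singular vectors of Xi_inf span
   GF(q)^4.  A form of rank 2 is a binary form in two linear forms l1, l2; a
   singular vector outside ker l1 /\ ker l2 splits it into two linear factors,
   which are independent because in characteristic 2 the polar form of their
   product is their 2x2 minor, and the polar form of Xi_inf is nonzero. *)

From HB Require Import structures.
From mathcomp Require Import all_boot all_order all_algebra.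
From mathcomp Require Import finfield ring.
Import GRing.Theory.
Local Open Scope ring_scope.

Set Implicit Arguments.
Unset Strict Implicit.
Unset Printing Implicit Defensive.

Section QuadraticForms.
Variables (R : comNzRingType) (n : nat).
Implicit Types (A B M : 'M[R]_n) (l u v w : 'rV[R]_n).

Definition bform A u w : R := (u *m A *m w^T) 0 0.
Definition qform A v : R := bform A v v.
Definition lform l v : R := (v *m l^T) 0 0.

Lemma bformDl A u u' w : bform A (u + u') w = bform A u w + bform A u' w.
Proof. by rewrite /bform !mulmxDl mxE. Qed.

Lemma bformDr A u w w' : bform A u (w + w') = bform A u w + bform A u w'.
Proof. by rewrite /bform linearD /= mulmxDr mxE. Qed.

Lemma bformZl A x u w : bform A (x *: u) w = x * bform A u w.
Proof. by rewrite /bform -!scalemxAl mxE. Qed.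

Lemma bformZr A x u w : bform A u (x *: w) = x * bform A u w.
Proof. by rewrite /bform linearZ /= -!scalemxAr mxE. Qed.

Lemma bform_delta A i j : bform A (delta_mx 0 i) (delta_mx 0 j) = A i j.
Proof. by rewrite /bform -rowE trmx_delta -colE !mxE. Qed.

Lemma qformD A u w :
  qform A (u + w) = qform A u + qform A w + (bform A u w + bform A w u).
Proof. by rewrite /qform bformDl !bformDr; ring. Qed.

Lemma qform_lin A x y u w :
  qform A (x *: u + y *: w) =
  qform A u * x ^+ 2 + (bform A u w + bform A w u) * x * y + qform A w * y ^+ 2.
Proof. by rewrite qformD /qform !bformZl !bformZr; ring. Qed.

Lemma qformE A v : qform A v = \sum_i \sum_j A i j * v 0 i * v 0 j.
Proof.
rewrite /qform /bform mxE.
under eq_bigr => j _ do rewrite !mxE big_distrl /=.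
by rewrite exchange_big; apply: eq_bigr => i _; apply: eq_bigr => j _; ring.
Qed.

Lemma qform_coef A v : qform (qf_coef A) v = qform A v.
Proof.
pose t i j := A i j * v 0 i * v 0 j.
have split_t i j : qf_coef A i j * v 0 i * v 0 j =
    (if (i <= j)%N then t i j else 0) + (if (i < j)%N then t j i else 0).
  rewrite mxE /t; have [-> | neq_ij] := eqVneq i j; first by rewrite leqnn ltnn addr0.
  by case: ltngtP => [_|_|/val_inj eq_ij]; [ring | ring | rewrite eq_ij eqxx in neq_ij].
rewrite !qformE; under eq_bigr => i _ do under eq_bigr => j _ do rewrite split_t.
under eq_bigr => i _ do rewrite big_split /=.
rewrite big_split /= [X in _ + X]exchange_big -big_split /=.
apply: eq_bigr => i _; rewrite -big_split /=; apply: eq_bigr => j _.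
by rewrite /t; case: leqP; rewrite ?addr0 ?add0r.
Qed.

Lemma qf_coef_eq A B : qform A =1 qform B -> qf_coef A = qf_coef B.
Proof.
move=> eqAB; apply/matrixP => i j; rewrite !mxE.
have diag k : A k k = B k k by have := eqAB (delta_mx 0 k); rewrite /qform !bform_delta.
have [->|_] := eqVneq i j; first exact: diag.
case: ifP => // _; have := eqAB (delta_mx 0 i + delta_mx 0 j).
by rewrite !qformD /qform !bform_delta !diag => /addrI.
Qed.

Lemma qform_change M A v : qform (qf_change M A) v = qform A (v *m M).
Proof. by rewrite /qform /bform /qf_change trmx_mul !mulmxA. Qed.

Lemma lformD l u w : lform l (u + w) = lform l u + lform l w.
Proof. by rewrite /lform mulmxDl mxE. Qed.

Lemma lform_combine x y l1 l2 v :
  lform (x *: l1 + y *: l2) v = x * lform l1 v + y * lform l2 v.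
Proof. by rewrite /lform linearD !linearZ /= mulmxDr -!scalemxAr !mxE. Qed.

Lemma bform_mul_lform l1 l2 u w : bform (l1^T *m l2) u w = lform l1 u * lform l2 w.
Proof.
rewrite /bform /lform !mulmxA -[u *m l1^T *m l2 *m w^T]mulmxA mxE big_ord1.
by congr (_ * _); rewrite -[l2 *m w^T]trmxK trmx_mul trmxK mxE.
Qed.

Lemma qf_nvars2_support A : qf_nvars A = 2%N ->
  exists k1 k2 : 'I_n, k1 != k2 /\
    forall v, qform A v = qform A (v 0 k1 *: delta_mx 0 k1 + v 0 k2 *: delta_mx 0 k2).
Proof.
rewrite /qf_nvars; set S := [set _ | _] => /eqP /cards2P [k1 [k2 [k12 defS]]].
exists k1, k2; split => // v.
have coef0 i j : qf_coef A i j != 0 -> (i \in [set k1; k2]) && (j \in [set k1; k2]).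
  move=> nz; rewrite -defS !inE; apply/andP; split; apply/existsP; exists i;
    apply/existsP; exists j; by rewrite eqxx ?orbT nz.
have proj_v k : k \in [set k1; k2] ->
    (v 0 k1 *: delta_mx 0 k1 + v 0 k2 *: delta_mx 0 k2) 0 k = v 0 k.
  rewrite !inE !mxE => /orP[] /eqP->;
    rewrite ?(negbTE k12) ?[k2 == k1]eq_sym ?(negbTE k12) /=;
    by rewrite eqxx mulr1 mulr0 ?addr0 ?add0r.
rewrite -[LHS]qform_coef -[RHS]qform_coef !qformE.
apply: eq_bigr => i _; apply: eq_bigr => j _.
have [->|/coef0/andP[ki kj]] := eqVneq (qf_coef A i j) 0; first by rewrite !mul0r.
by rewrite !proj_v.
Qed.

End QuadraticForms.

Lemma qform_rank2 (R : comUnitRingType) n (M A : 'M[R]_n) :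
  M \in unitmx -> qf_nvars (qf_change M A) = 2%N ->
  exists (l1 l2 : 'rV[R]_n) (al be ga : R), forall v,
    qform A v = al * lform l1 v ^+ 2 + be * lform l1 v * lform l2 v + ga * lform l2 v ^+ 2.
Proof.
move=> unitM /qf_nvars2_support [k1 [k2 [_ supp]]].
set B := qf_change M A; pose N := invmx M; pose e k : 'rV[R]_n := delta_mx 0 k.
exists (col k1 N)^T, (col k2 N)^T.
exists (qform B (e k1)), (bform B (e k1) (e k2) + bform B (e k2) (e k1)), (qform B (e k2)) => v.
have lformE k : lform (col k N)^T v = (v *m N) 0 k.
  by rewrite /lform trmxK colE mulmxA -colE mxE.
by rewrite -[v in LHS](mulmxKV unitM) -qform_change supp qform_lin !lformE; ring.
Qed.

Lemma det_mx22 (R : comNzRingType) (P : 'M[R]_2) :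
  \det P = P 0 0 * P 1 1 - P 0 1 * P 1 0.
Proof.
rewrite (expand_det_row _ 0) !big_ord_recl big_ord0 /cofactor !det_mx11 !mxE /=.
have -> : lift 0 0 = 1 :> 'I_2 by exact: val_inj.
have -> : lift 1 0 = 0 :> 'I_2 by exact: val_inj.
by rewrite /bump /= expr0 expr1; ring.
Qed.

Lemma det_lform22 (R : comNzRingType) n (l1 l2 u w : 'rV[R]_n) :
  \det (col_mx u w *m row_mx l1^T l2^T) =
  lform l1 u * lform l2 w - lform l2 u * lform l1 w.
Proof.
rewrite mul_col_row det_mx22.
have -> : (0 : 'I_(1 + 1)) = lshift 1 (0 : 'I_1) by exact: val_inj.
have -> : (1 : 'I_(1 + 1)) = rshift 1 (0 : 'I_1) by exact: val_inj.
by rewrite !mxE !(unsplitK (inl _)) !(unsplitK (inr _)) !row_mxEl !row_mxEr.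
Qed.

Section Characteristic2.
Variables (R : pzRingType) (char2R : (2 : R) = 0).

Lemma char2_oppr (x : R) : - x = x.
Proof.
by apply/eqP; rewrite -subr_eq0 -opprD -mulr2n -mulr_natl char2R mul0r oppr0.
Qed.

Lemma eq_mod2 (x y z : R) : x = y + 2 * z -> x = y.
Proof. by rewrite char2R mul0r addr0. Qed.

End Characteristic2.

Section FieldForms.
Variables (K : fieldType) (n : nat).
Implicit Types (A M : 'M[K]_n) (l u v w : 'rV[K]_n).

Lemma rank_col_mx2 l1 l2 u w :
  lform l1 u * lform l2 w - lform l2 u * lform l1 w != 0 -> \rank (col_mx l1 l2) = 2%N.
Proof.
move=> det_neq0; apply/eqP; rewrite eqn_leq rank_leq_row /=.
have unitP : col_mx u w *m row_mx l1^T l2^T \in unitmx.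
  by rewrite unitmxE unitfE det_lform22.
have := mxrankM_maxr (col_mx u w) (row_mx l1^T l2^T).
by rewrite (mxrank_unit unitP) -tr_col_mx mxrank_tr.
Qed.

Lemma binary_form_factor (al be ga x0 y0 : K) :
  (x0 != 0) || (y0 != 0) -> al * x0 ^+ 2 + be * x0 * y0 + ga * y0 ^+ 2 = 0 ->
  exists p1 r1 p2 r2 : K, forall x y,
    al * x ^+ 2 + be * x * y + ga * y ^+ 2 = (p1 * x + r1 * y) * (p2 * x + r2 * y).
Proof.
move=> nz root0; have [x0_0|x0_nz] := eqVneq x0 0.
  move: nz root0; rewrite x0_0 eqxx /= => y0_nz.
  rewrite expr0n !mulr0 mul0r !add0r => /eqP.
  rewrite mulf_eq0 expf_eq0 (negbTE y0_nz) andbF orbF => /eqP ga0.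
  by exists al, be, 1, 0 => x y; rewrite ga0; ring.
pose m := y0 / x0.
have : x0 ^+ 2 * (al + be * m + ga * m ^+ 2) = 0 by rewrite -root0 /m; field.
move/eqP; rewrite mulf_eq0 expf_eq0 (negbTE x0_nz) andbF /= => /eqP root_m.
have alE : al = - (be * m + ga * m ^+ 2).
  by apply/eqP; rewrite -addr_eq0 addrA root_m.
by exists (be + ga * m), ga, (- m), 1 => x y; rewrite alE; ring.
Qed.

Lemma two_planes_of_rank2 A M u0 w0 :
  (2 : K) = 0 -> M \in unitmx -> qf_nvars (qf_change M A) = 2%N ->
  bform A u0 w0 + bform A w0 u0 != 0 ->
  (forall v, exists u w, [/\ qform A u = 0, qform A w = 0 & v = u + w]) ->
  exists l1 l2, \rank (col_mx l1 l2) = 2%N /\ qf_coef A = qf_coef (l1^T *m l2).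
Proof.
move=> two0 unitM nvars2 polar_neq0 span.
have [l1 [l2 [al [be [ga binA]]]]] := qform_rank2 unitM nvars2.
have polarE (B : 'M[K]_n) u w :
    bform B u w + bform B w u = qform B (u + w) - qform B u - qform B w.
  by rewrite qformD; ring.
(* A singular vector off the common kernel of l1 and l2 gives a root of the
   binary form, which therefore splits into two linear factors. *)
have [z [qz0 nz]] : exists z, qform A z = 0 /\ (lform l1 z != 0) || (lform l2 z != 0).
  have nz_u0 : (lform l1 u0 != 0) || (lform l2 u0 != 0).
    move: polar_neq0; apply: contraNT; rewrite negb_or !negbK => /andP[/eqP l1u /eqP l2u].
    by rewrite polarE !binA !lformD l1u l2u; apply/eqP; ring.
  have [s [t [qs qt u0E]]] := span u0.
  have [nzs|] := boolP ((lform l1 s != 0) || (lform l2 s != 0)); first by exists s.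
  rewrite negb_or !negbK => /andP[/eqP l1s /eqP l2s]; exists t; split => //.
  by move: nz_u0; rewrite u0E !lformD l1s l2s !add0r.
have [p1 [r1 [p2 [r2 binE]]]] := binary_form_factor nz (etrans (esym (binA z)) qz0).
pose L1 := p1 *: l1 + r1 *: l2; pose L2 := p2 *: l1 + r2 *: l2.
have qAE : qform A =1 qform (L1^T *m L2).
  by move=> v; rewrite binA binE /qform bform_mul_lform !lform_combine.
exists L1, L2; split; last exact: qf_coef_eq.
(* In characteristic 2 the minor of (L1, L2) at (u0, w0) is the polar form. *)
apply: (@rank_col_mx2 _ _ u0 w0).
rewrite -[X in _ - X](char2_oppr two0) opprK [lform L2 u0 * _]mulrC.
by rewrite -!bform_mul_lform polarE -!qAE -polarE.
Qed.

End FieldForms.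

Definition vec4 (R : nzRingType) (x0 x1 x2 x3 : R) : 'rV[R]_4 :=
  \row_(i < 4) nth 0 [:: x0; x1; x2; x3] i.

Lemma vec4E (R : nzRingType) (v : 'rV[R]_4) : v = vec4 (v 0 0) (v 0 1) (v 0 2) (v 0 3).
Proof.
apply/rowP => i; rewrite mxE.
by case: i => [[|[|[|[|//]]]] lt_i4] /=; congr (v 0 _); exact: val_inj.
Qed.

Lemma Qform_vec4 (R : comNzRingType) (a b c d e f x y z t : R) :
  Qform a b c d e f (vec4 x y z t) =
  a * x ^+ 2 + b * y ^+ 2 + c * x * y + d * x * t + e * y * t + f * t ^+ 2 - z * t.
Proof.
rewrite -[Qform _ _ _ _ _ _ _]/(qform (Qmat a b c d e f) _) qformE.
by rewrite !big_ord_recr !big_ord0 /= !mxE /=; ring.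
Qed.

Lemma vec4D (R : nzRingType) (x0 x1 x2 x3 y0 y1 y2 y3 : R) :
  vec4 x0 x1 x2 x3 + vec4 y0 y1 y2 y3 = vec4 (x0 + y0) (x1 + y1) (x2 + y2) (x3 + y3).
Proof. by apply/rowP => k; rewrite !mxE; case: k => [[|[|[|[|//]]]] ?]. Qed.

Lemma qform_Xi (R : comNzRingType) (nu a0 a1 b0 b1 c0 c1 x0 x1 y0 y1 : R) :
  qform (Xi_mat nu a0 a1 b0 b1 c0 c1) (vec4 x0 x1 y0 y1) =
  (a1 + 1) * x0 ^+ 2 + x0 * x1 + (a0 + (1 + nu) * a1 + nu) * x1 ^+ 2
  + (b1 + 1) * y0 ^+ 2 + y0 * y1 + (b0 + (1 + nu) * b1 + nu) * y1 ^+ 2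
  + c1 * x0 * y0 + (c0 + c1) * x0 * y1 + (c0 + c1) * x1 * y0 + (c0 + (1 + nu) * c1) * x1 * y1.
Proof. by rewrite qformE !big_ord_recr !big_ord0 /= !mxE /=; ring. Qed.

Lemma union_two_lines_not_sub (K : fieldType) (S : 'rV[K]_4 -> Prop) (W : 'M[K]_(2, 4)) :
  union_two_lines S -> exists v, [/\ v != 0, S v & ~~ (v <= W)%MS].
Proof.
case=> [U1 [U2 [rk1 rk2 neqU12 defS]]].
have eqW (U : 'M[K]_(2, 4)) : \rank U = 2%N -> (U <= W)%MS -> (W <= U)%MS.
  move=> rkU sUW; rewrite -(mxrank_leqif_sup sUW).2 rkU eqn_leq rank_leq_row.
  by rewrite -{1}rkU mxrankS.
have [U [SU notUW]] : exists U : 'M[K]_(2, 4),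
    (forall v, v != 0 -> (v <= U)%MS -> S v) /\ ~~ (U <= W)%MS.
  have [s1|] := boolP (U1 <= W)%MS.
    have [s2|] := boolP (U2 <= W)%MS.
      case/negP: neqU12; apply/andP; split.
        exact: submx_trans s1 (eqW _ rk2 s2).
      exact: submx_trans s2 (eqW _ rk1 s1).
    by exists U2; split => // v v_nz vU; apply/(defS v v_nz); right.
  by exists U1; split => // v v_nz vU; apply/(defS v v_nz); left.
have [i notW] := row_subPn notUW.
have row_nz : row i U != 0 by apply: contraNneq notW => ->; rewrite sub0mx.
by exists (row i U); split => //; apply: SU row_nz (row_sub i U).
Qed.

Section PointsAtInfinity.
Variables (L : fieldType) (q : nat) (a b c d e f : L).
Hypotheses (q_gt0 : (0 < q)%N) (char2L : (2 : L) = 0).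

Lemma Cinf_point v : Cinf q a b c d e f v ->
  [/\ v 0 3 = 0, a * v 0 0 ^+ 2 + c * v 0 0 * v 0 1 + b * v 0 1 ^+ 2 = 0
    & v 0 0 ^+ q.+1 = v 0 1 ^+ q.+1].
Proof.
case=> _ v3 Qv Hv; split => //.
  by rewrite -Qv [v in RHS]vec4E Qform_vec4 v3; ring.
move: Hv; rewrite /Hform v3 expr0n (gtn_eqF q_gt0) !mulr0 add0r sub0r => /eqP.
by rewrite oppr_eq0 addr_eq0 (char2_oppr char2L) => /eqP.
Qed.

Lemma Cinf_other_slope (s : L) : union_two_lines (Cinf q a b c d e f) ->
  exists2 r, r != s & r ^+ q.+1 = 1 /\ a * r ^+ 2 + c * r + b = 0.
Proof.
move/(union_two_lines_not_sub (col_mx (vec4 0 0 1 0) (vec4 s 1 0 0))).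
case=> v [_ Cv notW]; have [v3 Qv Hv] := Cinf_point Cv.
have v_off : v 0 0 != s * v 0 1.
  apply: contraNneq notW => v0E; apply/submxP.
  exists (row_mx (v 0 2)%:M (v 0 1)%:M : 'M_(1, 1 + 1)).
  rewrite (mul_row_col (v 0 2)%:M) !mul_scalar_mx [LHS]vec4E; apply/rowP => k.
  by rewrite !mxE; case: k => [[|[|[|[|//]]]] ?] /=; rewrite ?v0E ?v3; ring.
have v1_nz : v 0 1 != 0.
  apply: contraNneq v_off => v1_0; move: Hv; rewrite v1_0 expr0n /= => /eqP.
  by rewrite expf_eq0 /= => /eqP->; rewrite mulr0.
exists (v 0 0 / v 0 1); first by apply: contraNneq v_off => <-; rewrite divfK.
split; first by rewrite expr_div_n Hv divff // expf_neq0.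
by apply: (mulIf (expf_neq0 2 v1_nz)); rewrite mul0r -Qv; field.
Qed.

End PointsAtInfinity.

Section Char2Conjugates.
Variables (R : comNzRingType) (e nu : R).
Hypotheses (char2R : (2 : R) = 0) (e_root : e ^+ 2 + e + nu = 0).

Let nuE : nu = - (e ^+ 2 + e).
Proof. by apply/eqP; rewrite -addr_eq0 addrC e_root. Qed.

Lemma conj_norm u0 u1 :
  (u0 + u1 * e) * (u0 + u1 * (e + 1)) = u0 ^+ 2 + u0 * u1 + nu * u1 ^+ 2.
Proof.
by apply: (eq_mod2 char2R (z := u1 * (u0 * e + u1 * (e ^+ 2 + e)))); rewrite nuE; ring.
Qed.

Lemma conj_trace3 al0 al1 u0 u1 v0 v1 :
  (al0 + al1 * e) * (u0 + u1 * e) * (v0 + v1 * e)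
    + (al0 + al1 * (e + 1)) * (u0 + u1 * (e + 1)) * (v0 + v1 * (e + 1)) =
  al1 * u0 * v0 + (al0 + al1) * (u0 * v1 + u1 * v0) + al0 * u1 * v1
    + al1 * (1 + nu) * u1 * v1.
Proof.
pose z := (al0 + al1 * e) * (u0 + u1 * e) * (v0 + v1 * e) + al0 * e * u1 * v1
  + al1 * (e * (u0 * v1 + u1 * v0) + 2 * (e ^+ 2 + e) * u1 * v1).
by apply: (eq_mod2 char2R (z := z)); rewrite nuE /z; ring.
Qed.

End Char2Conjugates.

Section HermitianTrace.
Variables (F L : finFieldType) (iota : {rmorphism F -> L}) (h : nat).
Local Notation q := (2 ^ h)%N.
Hypotheses (h_gt0 : (0 < h)%N) (cardF : #|F| = q) (cardL : #|L| = (q ^ 2)%N).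
Variables (nu : F) (eps : L).
Hypotheses (eps_root : eps ^+ 2 + eps + iota nu = 0) (eps_notin : forall u, eps != iota u).

Lemma char2F : (2 : F) = 0.
Proof. exact/pcharf0/(card_finPcharP cardF). Qed.

Lemma char2L : (2 : L) = 0.
Proof. by rewrite -(rmorph_nat iota) char2F rmorph0. Qed.

Lemma frobD (x y : L) : (x + y) ^+ q = x ^+ q + y ^+ q.
Proof. by rewrite exprDn_pchar // pnatX (pnatE _ (isT : prime 2)) !inE char2L eqxx. Qed.

Lemma frob_iota u : iota u ^+ q = iota u.
Proof. by rewrite -rmorphXn -cardF expf_card. Qed.

(* The paper's t = t0 + t1 eps, with GF(q) embedded in GF(q^2) by iota. *)
Definition of_coords (x0 x1 : F) : L := iota x0 + iota x1 * eps.

Lemma of_coords_inj : injective (fun x : F * F => of_coords x.1 x.2).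
Proof.
move=> [x0 x1] [y0 y1] /= eq_coords.
have : iota (x0 - y0) + iota (x1 - y1) * eps = of_coords x0 x1 - of_coords y0 y1.
  by rewrite /of_coords !rmorphB; ring.
rewrite eq_coords subrr; have [<-|x1_neq] := eqVneq x1 y1.
  by rewrite subrr rmorph0 mul0r addr0 => /eqP; rewrite fmorph_eq0 subr_eq0 => /eqP->.
move=> diff0; case/eqP: (eps_notin (- (x0 - y0) / (x1 - y1))).
rewrite fmorph_div rmorphN; apply: (mulIf (x := iota (x1 - y1))).
  by rewrite fmorph_eq0 subr_eq0.
rewrite divfK ?fmorph_eq0 ?subr_eq0 //.
by apply/eqP; rewrite -addr_eq0 addrC mulrC diff0.
Qed.

Lemma of_coords_surj w : exists x0 x1, w = of_coords x0 x1.
Proof.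
have : w \in codom (fun x : F * F => of_coords x.1 x.2).
  by apply: (inj_card_onto of_coords_inj); rewrite card_prod cardF cardL mulnn.
by case/codomP => [[x0 x1] ->]; exists x0, x1.
Qed.

Lemma frob_not_id : ~ (forall w : L, w ^+ q = w).
Proof.
move=> frob_id; pose p : {poly L} := 'X^q - 'X.
have q_gt1 : (1 < q)%N by rewrite -{1}(expn0 2) ltn_exp2l.
have size_p : size p = q.+1 by rewrite size_polyDl ?size_polyXn // size_polyN size_polyX.
have p_neq0 : p != 0 by rewrite -size_poly_eq0 size_p.
have := max_poly_roots p_neq0 _ (enum_uniq L).
rewrite -cardE cardL size_p.
have -> : all (root p) (enum L) by apply/allP => w _; rewrite /root !hornerE frob_id subrr.
by move=> /(_ isT); rewrite ltnS leqNgt ltn_Pmull ?(ltnW q_gt1).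
Qed.

Lemma frob_eps : eps ^+ q = eps + 1.
Proof.
(* eps ^+ q is the root eps or eps + 1 of X^2 + X + nu, and it is not eps since
   Frobenius does not fix all of L. *)
have root_q : (eps ^+ q) ^+ 2 + eps ^+ q + iota nu = 0.
  by rewrite -exprM mulnC exprM -frob_iota -!frobD eps_root expr0n expn_eq0.
have : (eps ^+ q - eps) * (eps ^+ q + eps + 1) =
    ((eps ^+ q) ^+ 2 + eps ^+ q + iota nu) - (eps ^+ 2 + eps + iota nu) by ring.
rewrite root_q eps_root subrr.
move/eqP; rewrite mulf_eq0 => /orP[|]; rewrite ?subr_eq0 => /eqP frob_eps.
  exfalso; apply: frob_not_id => w; have [x0 [x1 ->]] := of_coords_surj w.
  by rewrite /of_coords frobD exprMn !frob_iota frob_eps.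
by apply/eqP; rewrite -[eps + 1](char2_oppr char2L) -addr_eq0 addrA frob_eps.
Qed.

Lemma frob_of_coords x0 x1 : of_coords x0 x1 ^+ q = iota x0 + iota x1 * (eps + 1).
Proof. by rewrite /of_coords frobD exprMn !frob_iota frob_eps. Qed.

Lemma of_coordsB x0 x1 y0 y1 :
  of_coords (x0 - y0) (x1 - y1) = of_coords x0 x1 - of_coords y0 y1.
Proof. by rewrite /of_coords !rmorphB; ring. Qed.

Lemma trace_of_coords3 al0 al1 u0 u1 v0 v1 :
  let w := of_coords al0 al1 * of_coords u0 u1 * of_coords v0 v1 in
  w + w ^+ q = iota (al1 * u0 * v0 + (al0 + al1) * (u0 * v1 + u1 * v0) + al0 * u1 * v1
                     + al1 * (1 + nu) * u1 * v1).
Proof.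
rewrite /= !exprMn !frob_of_coords /of_coords (conj_trace3 char2L eps_root).
by rewrite !(rmorphD, rmorphM, rmorph1).
Qed.

Lemma norm_of_coords u0 u1 :
  of_coords u0 u1 ^+ q.+1 = iota (u0 ^+ 2 + u0 * u1 + nu * u1 ^+ 2).
Proof.
rewrite exprS frob_of_coords /of_coords (conj_norm char2L eps_root).
by rewrite !(rmorphD, rmorphM, rmorphXn).
Qed.

Lemma Xi_trace (a0 a1 b0 b1 c0 c1 x0 x1 y0 y1 : F) :
  let X := of_coords x0 x1 in let Y := of_coords y0 y1 in
  let g := of_coords a0 a1 * X ^+ 2 + of_coords b0 b1 * Y ^+ 2
           + of_coords c0 c1 * (X * Y) in
  iota (qform (Xi_mat nu a0 a1 b0 b1 c0 c1) (vec4 x0 x1 y0 y1)) =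
  g + g ^+ q + X ^+ q.+1 + Y ^+ q.+1.
Proof.
move=> X Y g.
have traceD3 (w1 w2 w3 : L) : let w := w1 + w2 + w3 in
    w + w ^+ q = (w1 + w1 ^+ q) + (w2 + w2 ^+ q) + (w3 + w3 ^+ q).
  by rewrite /= !frobD; ring.
rewrite /g !expr2 !mulrA traceD3 !trace_of_coords3 !norm_of_coords -!rmorphD.
congr (iota _).
symmetry; apply: (eq_mod2 char2F (z := (a0 + a1) * x0 * x1 + (b0 + b1) * y0 * y1)).
by rewrite qform_Xi; ring.
Qed.

Lemma Xi_singular (a0 a1 b0 b1 c0 c1 : F) (s : L) x0 x1 y0 y1 :
  s ^+ q.+1 = 1 -> of_coords a0 a1 * s ^+ 2 + of_coords c0 c1 * s + of_coords b0 b1 = 0 ->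
  of_coords x0 x1 = s * of_coords y0 y1 ->
  qform (Xi_mat nu a0 a1 b0 b1 c0 c1) (vec4 x0 x1 y0 y1) = 0.
Proof.
move=> s_unit s_root XE; apply: (fmorph_inj iota); rewrite rmorph0 Xi_trace /= XE.
set Y := of_coords y0 y1.
have -> : of_coords a0 a1 * (s * Y) ^+ 2 + of_coords b0 b1 * Y ^+ 2
            + of_coords c0 c1 * (s * Y * Y) =
    Y ^+ 2 * (of_coords a0 a1 * s ^+ 2 + of_coords c0 c1 * s + of_coords b0 b1) by ring.
rewrite s_root mulr0 expr0n expn_eq0 /= !add0r exprMn s_unit mul1r.
by rewrite -mulr2n -mulr_natl char2L mul0r.
Qed.

Lemma Xi_singular_span (a0 a1 b0 b1 c0 c1 : F) (s1 s2 : L) : s1 != s2 ->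
  s1 ^+ q.+1 = 1 /\ of_coords a0 a1 * s1 ^+ 2 + of_coords c0 c1 * s1 + of_coords b0 b1 = 0 ->
  s2 ^+ q.+1 = 1 /\ of_coords a0 a1 * s2 ^+ 2 + of_coords c0 c1 * s2 + of_coords b0 b1 = 0 ->
  forall v, exists u w, [/\ qform (Xi_mat nu a0 a1 b0 b1 c0 c1) u = 0,
                          qform (Xi_mat nu a0 a1 b0 b1 c0 c1) w = 0 & v = u + w].
Proof.
move=> s12 [s1_unit s1_root] [s2_unit s2_root] v.
(* Split (X, Y) as (s1 Y1, Y1) + (s2 Y2, Y2) and read both halves in coordinates. *)
pose X := of_coords (v 0 0) (v 0 1); pose Y := of_coords (v 0 2) (v 0 3).
pose Y2 := (X - s1 * Y) / (s2 - s1); pose Y1 := Y - Y2.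
have [p0 [p1 Y1E]] := of_coords_surj Y1; have [r0 [r1 X1E]] := of_coords_surj (s1 * Y1).
exists (vec4 r0 r1 p0 p1), (vec4 (v 0 0 - r0) (v 0 1 - r1) (v 0 2 - p0) (v 0 3 - p1)).
split; last by rewrite vec4D !subrKC -vec4E.
  by apply: (Xi_singular s1_unit s1_root); rewrite -X1E -Y1E.
apply: (Xi_singular s2_unit s2_root); rewrite !of_coordsB -/X -/Y -X1E -Y1E /Y1 /Y2.
by field; rewrite subr_eq0 eq_sym.
Qed.

End HermitianTrace.

Theorem lemma5 (h : nat) (h_gt0 : (0 < h)%N)
  (F L : finFieldType) (iota : {rmorphism F -> L})
  (cardF : #|F| = (2 ^ h)%N) (cardL : #|L| = ((2 ^ h) ^ 2)%N)
  (nu : F) (eps : L)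
  (nu_neq1 : nu != 1) (tr_nu : abs_trace h nu = 1)
  (eps_root : eps ^+ 2 + eps + iota nu = 0)
  (eps_notin : forall u : F, eps != iota u)
  (a b c d e f : L) (a0 a1 b0 b1 c0 c1 : F)
  (ha : a = iota a0 + iota a1 * eps)
  (hb : b = iota b0 + iota b1 * eps)
  (hc : c = iota c0 + iota c1 * eps)
  (hQ : qf_hyperbolic (Qmat a b c d e f))
  (hC : union_two_lines (Cinf (2 ^ h) a b c d e f))
  (hrank : qf_rank (Xi_mat nu a0 a1 b0 b1 c0 c1) 2) :
  qf_two_planes (Xi_mat nu a0 a1 b0 b1 c0 c1).
Proof.
have char2F := char2F cardF; have char2L := char2L iota cardF.
have q_gt0 : (0 < 2 ^ h)%N by rewrite expn_gt0.
have [s1 _ slope1] := Cinf_other_slope q_gt0 char2L 0 hC.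
have [s2 s21 slope2] := Cinf_other_slope q_gt0 char2L s1 hC.
rewrite ha hb hc in slope1 slope2; rewrite eq_sym in s21.
have [[M unitM nvars2] _] := hrank.
have polar01 : bform (Xi_mat nu a0 a1 b0 b1 c0 c1) (delta_mx 0 0) (delta_mx 0 1)
    + bform (Xi_mat nu a0 a1 b0 b1 c0 c1) (delta_mx 0 1) (delta_mx 0 0) != 0.
  by rewrite !bform_delta !mxE /= addr0 oner_eq0.
have span := Xi_singular_span h_gt0 cardF cardL eps_root eps_notin s21 slope1 slope2.
exact: two_planes_of_rank2 char2F unitM nvars2 polar01 span.
Qed.
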